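(* MUDAN (for any admissible priority rule) is incentive compatible: for every true profile $\theta$, every buyer $i$, every global profile $\theta'$ and every report $\theta''_i=(v''_i,r''_i)$ with $r''_i\subseteq r_i$, we have $u_i(\theta_i,\theta'_{-i})\ge u_i(\theta''_i,\theta''_{-i})$, where $\theta''_{-i}$ is obtained from $\theta'_{-i}$ by replacing by the silent report $(0,\varnothing)$ the report of every buyer that is not reachable from $s$ in the profile graph when $i$ reports $\theta''_i$.
   Context: Single-demand model. A seller $s$ has $m\ge 1$ identical items. Buyers $B=\{1,\dots,n\}$; each buyer $i$ wants at most one item and has a private true profile $\theta_i=(v_i,r_i)$, where $v_i\in\mathbb{R}_{\ge 0}$ is its valuation and $r_i\subseteq B$ its set of out-neighbours. The seller has a fixed, publicly known neighbour set $r_s\subseteq B$, and every buyer is reachable from $s$ in the directed graph with edges $(x,y)$ for $y\in r_x$. A buyer reports $\theta'_i=(v'_i,r'_i)$ with $v'_i\in\mathbb{R}_{\ge0}$ and $r'_i\subseteq r_i$. A global profile $\theta'=(\theta'_1,\dots,\theta'_n)$ determines the profile graph $G_{\theta'}$ on $\{s\}\cup B$ with an edge $(x,y)$ iff $y\in r'_x$ (for $x=s$ use $r_s$). Only buyers reachable from $s$ in $G_{\theta'}$ take part; an unreachable buyer is treated as having the silent report $(0,\varnothing)$ and gets no item and zero payment. A mechanism maps each global profile $\theta'$ to an allocation $\pi(\theta')\in\{0,1\}^n$ and payments $p(\theta')\in\mathbb{R}^n$. Utility: $u_i(\theta')=v_i\pi_i(\theta')-p_i(\theta')$ (true valuation).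 Priority rule: each buyer $i$ is given a priority $\sigma_i$ that is a function of its reported neighbour set $r'_i$ only (e.g. $\sigma_i=|r'_i|$), independent of all reported valuations and non-decreasing with respect to inclusion of $r'_i$; ties are broken by a fixed total order on buyers. MUDAN, run on a reported profile $\theta'$. It maintains an explored set $A\subseteq B$, a winner set $W\subseteq A$, remaining supply $m'=m-|W|$, and tentative payments. For current $A,W$ the potential-winner set $P(A,W)$ is: $P=A$ if $|A\setminus W|\le m'$; otherwise $P=W\cup\{$the $m'$ buyers of $A\setminus W$ with highest reported valuations$\}$ (ties broken by a fixed total order). Buyers in $A\setminus P$ are called exhausted. Initialise $A=r_s$, $W=\varnothing$, and repeat: (1) Closure: while some buyer $x\in W\cup(A\setminus P(A,W))$ (with $P$ recomputed from the current $A,W$) has $r'_x\not\subseteq A$, set $A\leftarrow A\cup r'_x$. (2) Let $P=P(A,W)$; if $P\setminus W=\varnothing$, stop. (3) Let $w$ be the buyer of $P\setminus W$ with highest priority; set its tentative payment $\hat p_w$ to the $(m'+1)$-th highest reported valuation in $A\setminus W$ (current $m'$, before adding $w$), or $0$ if $|A\setminus W|\le m'$; add $w$ to $W$. Output: every $w\in W$ gets $\pi_w=1$, $p_w=\hat p_w$; every other buyer gets $\pi_i=0$, $p_i=0$. *)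

From HB Require Import structures.
From mathcomp Require Import all_boot all_order all_algebra.
Set Implicit Arguments. Unset Strict Implicit. Unset Printing Implicit Defensive.
Import Order.TTheory GRing.Theory Num.Theory.
Local Open Scope ring_scope.

Section Mudan.
Variables (R : realDomainType) (n : nat).

(* buyers are 'I_n; a report is (valuation, reported out-neighbour set) *)
Definition report := (R * {set 'I_n})%type.
Definition profile := 'I_n -> report.
Definition silent : report := (0, set0).

Definition upd (p : profile) (i : 'I_n) (x : report) : profile :=
  fun j => if j == i then x else p j.

(* buyers reachable from the seller s (with neighbour set rs) in the profile
   graph G_p: iterate "rs plus out-neighbours of the current set" *)
Definition reach_step (rs : {set 'I_n}) (p : profile) (X : {set 'I_n}) :
  {set 'I_n} := rs :|: \bigcup_(x in X) (p x).2.
Definition reachable (rs : {set 'I_n}) (p : profile) : {set 'I_n} :=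
  iter n.+1 (reach_step rs p) set0.

Definition silence_unreach (rs : {set 'I_n}) (p : profile) (i : 'I_n) : profile :=
  fun j => if (j == i) || (j \in reachable rs p) then p j else silent.

Definition vbeats (p : profile) (y x : 'I_n) : bool :=
  ((p x).1 < (p y).1) || (((p y).1 == (p x).1) && (y < x)%N).

Definition topk (p : profile) (k : nat) (S : {set 'I_n}) : {set 'I_n} :=
  [set x in S | (#|[set y in S | vbeats p y x]| < k)%N].

(* the (k+1)-th highest reported valuation in S (0 if it does not exist) *)
Definition kth_val (p : profile) (k : nat) (S : {set 'I_n}) : R :=
  match [pick y in S | #|[set z in S | vbeats p z y]| == k] with
  | Some y => (p y).1
  | None => 0
  end.

(* potential-winner set P(A,W), with remaining supply m - |W| *)
Definition potential (p : profile) (m : nat) (A W : {set 'I_n}) : {set 'I_n} :=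
  let m' := (m - #|W|)%N in
  if (#|A :\: W| <= m')%N then A else W :|: topk p m' (A :\: W).

(* buyers whose neighbours are to be explored: winners and exhausted buyers *)
Definition to_expand (p : profile) (m : nat) (A W : {set 'I_n}) : {set 'I_n} :=
  W :|: (A :\: potential p m A W).

(* closure step (1); each iteration adds a new buyer, so fuel n.+1 suffices *)
Fixpoint closure (fuel : nat) (p : profile) (m : nat) (A W : {set 'I_n}) :
  {set 'I_n} :=
  match fuel with
  | 0 => A
  | f.+1 =>
    match [pick x in to_expand p m A W | ~~ ((p x).2 \subset A)] with
    | Some x => closure f p m (A :|: (p x).2) W
    | None => A
    end
  end.

Definition pbeats (prio : {set 'I_n} -> nat) (p : profile) (x y : 'I_n) : bool :=
  (prio (p y).2 < prio (p x).2)%N || ((prio (p x).2 == prio (p y).2) && (x < y)%N).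

Definition top_prio (prio : {set 'I_n} -> nat) (p : profile) (S : {set 'I_n}) :
  option 'I_n :=
  [pick x in S | [forall y in S, (y == x) || pbeats prio p x y]].

(* main loop; each iteration adds a new winner, so fuel n.+1 suffices.
   Returns the winner set and tentative payments. *)
Fixpoint mudan_loop (fuel : nat) (prio : {set 'I_n} -> nat) (p : profile)
  (m : nat) (A W : {set 'I_n}) (pay : 'I_n -> R) : {set 'I_n} * ('I_n -> R) :=
  match fuel with
  | 0 => (W, pay)
  | f.+1 =>
    let A1 := closure n.+1 p m A W in
    let P := potential p m A1 W in
    match top_prio prio p (P :\: W) with
    | None => (W, pay)
    | Some w =>
      let m' := (m - #|W|)%N in
      let price := if (#|A1 :\: W| <= m')%N then 0 else kth_val p m' (A1 :\: W) in
      mudan_loop f prio p m A1 (w |: W) (fun j => if j == w then price else pay j)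
    end
  end.

Definition mudan (prio : {set 'I_n} -> nat) (rs : {set 'I_n}) (m : nat)
  (p : profile) : ('I_n -> bool) * ('I_n -> R) :=
  let res := mudan_loop n.+1 prio p m rs set0 (fun _ => 0) in
  (fun j => j \in res.1, fun j => if j \in res.1 then res.2 j else 0).

Definition utility (vi : R) (i : 'I_n) (out : ('I_n -> bool) * ('I_n -> R)) : R :=
  (if out.1 i then vi else 0) - out.2 i.

End Mudan.

From Pilot Require Import Defs.
From HB Require Import structures.
From mathcomp Require Import all_boot all_order all_algebra.
From mathcomp Require Import zify.
Import Order.TTheory GRing.Theory Num.Theory.
Local Open Scope ring_scope.
Set Implicit Arguments. Unset Strict Implicit. Unset Printing Implicit Defensive.

(* Fix a buyer i and compare the deviating profile pD (i reports rep'', the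
   others report theta') with the truthful profile pT (i reports theta_i); the
   two agree off i, i's true valuation is (pT i).1, and since i may only hide
   neighbours, i's priority under pD is at most its priority under pT.

   First, silencing the buyers unreachable under pD changes nothing, because
   MUDAN only reads reports inside any neighbour-closed set containing the
   seller's neighbours (section Locality).  Along a run, the
   number of i's rivals of any kind exceeds the remaining supply by more and
   more (relation [tighter]); hence i's membership in the potential-winner set
   is antitone, and if i wins under pD it pays the clearing price of some later
   state.  When that price c is below i's true valuation, i is a potential
   winner under pT in every intermediate state, so both runs explore the same
   buyers, see the same potential winners and, by monotonicity of priorities,
   pick the same winners until i is picked under pT, at a price at most c
   (price_truthful_le).  With individual rationality of the truthful report
   (payoff_ge0) this yields the theorem. *)

Section Rank.
Variables (T : finType) (lt : rel T).
Hypotheses (lt_irr : irreflexive lt) (lt_trans : transitive lt).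
Hypothesis lt_total : forall x y, x != y -> lt x y || lt y x.
Implicit Types (S : {set T}) (x y : T).

Definition rank S x : nat := #|[set z in S | lt z x]|.

Lemma rank_lt S x y : x \in S -> lt x y -> (rank S x < rank S y)%N.
Proof.
move=> xS lxy; apply: proper_card; apply/properP; split.
  by apply/subsetP=> z; rewrite !inE => /andP[-> /lt_trans]; apply.
by exists x; rewrite !inE ?xS ?lxy ?lt_irr.
Qed.

Lemma rank_bound S x : x \in S -> (rank S x < #|S|)%N.
Proof.
move=> xS; apply: proper_card; apply/properP; split.
  by apply/subsetP=> z; rewrite inE => /andP[].
by exists x; rewrite ?inE ?xS ?lt_irr.
Qed.

(* Ranks are injective on S, hence every value below |S| is attained. *)
Lemma rank_onto S k : (k < #|S|)%N -> exists2 y, y \in S & rank S y = k.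
Proof.
move=> kS; set s := map (rank S) (enum S).
have s_uniq : uniq s.
  rewrite map_inj_in_uniq ?enum_uniq // => x y; rewrite !mem_enum => xS yS e.
  apply/eqP; apply/negPn/negP=> /lt_total /orP[] h.
    by have := rank_lt xS h; rewrite e ltnn.
  by have := rank_lt yS h; rewrite e ltnn.
have s_sub : {subset s <= iota 0 #|S|}.
  move=> z /mapP[x]; rewrite mem_enum => xS ->; rewrite mem_iota add0n.
  exact: rank_bound.
have s_size : (size (iota 0 #|S|) <= size s)%N by rewrite size_iota size_map -cardE.
have [_ s_eq] := uniq_min_size s_uniq s_sub s_size.
have : k \in s by rewrite s_eq mem_iota add0n.
by case/mapP=> y; rewrite mem_enum => yS ->; exists y.
Qed.

Lemma rank_D1 S i x : i \in S -> rank S x = (lt i x + rank (S :\ i) x)%N.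
Proof.
move=> iS; rewrite /rank (cardsD1 i) inE iS /=; congr (_ + _)%N.
by apply: eq_card => y; rewrite !inE andbA.
Qed.

Lemma rank_lt_top S i k x : i \in S -> (rank S i < k)%N -> x \in S -> x != i ->
  (rank S x < k)%N = (rank (S :\ i) x < k.-1)%N.
Proof.
move=> iS ik xS xi; rewrite (rank_D1 _ iS).
have [ix|nix] := boolP (lt i x); first by case: k ik.
have xi_lt : lt x i by move: (lt_total xi); rewrite (negbTE nix) orbF.
have := rank_lt xS xi_lt; rewrite !(rank_D1 _ iS) lt_irr (negbTE nix) => hx.
by rewrite (rank_D1 _ iS) lt_irr in ik; apply/idP/idP => _; lia.
Qed.
End Rank.

(* The lexicographic order on buyers: higher key first, ties broken by the
   smaller index.  Both orders used by MUDAN (valuations, priorities) are of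
   this form. *)
Section KeyOrder.
Variables (d : Order.disp_t) (K : orderType d) (n : nat) (key : 'I_n -> K).

Definition key_beats (x y : 'I_n) : bool :=
  (key y < key x)%O || ((key x == key y) && (x < y)%N).

Lemma key_beats_irr : irreflexive key_beats.
Proof. by move=> x; rewrite /key_beats ltxx ltnn andbF. Qed.

Lemma key_beats_trans : transitive key_beats.
Proof.
move=> y x z; rewrite /key_beats.
case/orP=> [h1|/andP[/eqP e1 h1]] /orP[h2|/andP[/eqP e2 h2]].
- by rewrite (lt_trans h2 h1).
- by rewrite -e2 h1.
- by rewrite e1 h2.
- by rewrite e1 e2 eqxx (ltn_trans h1 h2) orbT.
Qed.

Lemma key_beats_total x y : x != y -> key_beats x y || key_beats y x.
Proof.
move=> nxy; rewrite /key_beats; case: (ltgtP (key x) (key y)) => //= _.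
by case: (ltngtP x y) => // /val_inj exy; rewrite exy eqxx in nxy.
Qed.

Lemma key_beats_asym x y : key_beats x y -> ~~ key_beats y x.
Proof.
by move=> hxy; apply/negP => /(key_beats_trans hxy); rewrite key_beats_irr.
Qed.
End KeyOrder.

Section BuyerOrders.
Variables (R : realDomainType) (n : nat) (prio : {set 'I_n} -> nat) (p : profile R n).

Lemma vbeatsE x y : vbeats p x y = key_beats (fun z => (p z).1) x y.
Proof. by []. Qed.

Lemma pbeatsE x y : pbeats prio p x y = key_beats (fun z => prio (p z).2) x y.
Proof. by rewrite /pbeats /key_beats ltEnat. Qed.

Lemma vbeats_irr : irreflexive (vbeats p).
Proof. by move=> x; rewrite vbeatsE key_beats_irr. Qed.

Lemma vbeats_trans : transitive (vbeats p).
Proof. by move=> y x z; rewrite !vbeatsE; exact: key_beats_trans. Qed.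

Lemma vbeats_total x y : x != y -> vbeats p x y || vbeats p y x.
Proof. by rewrite !vbeatsE; apply: key_beats_total. Qed.

Lemma pbeats_irr : irreflexive (pbeats prio p).
Proof. by move=> x; rewrite pbeatsE key_beats_irr. Qed.

Lemma pbeats_trans : transitive (pbeats prio p).
Proof. by move=> y x z; rewrite !pbeatsE; exact: key_beats_trans. Qed.

Lemma pbeats_total x y : x != y -> pbeats prio p x y || pbeats prio p y x.
Proof. by rewrite !pbeatsE; apply: key_beats_total. Qed.

Lemma pbeats_asym x y : pbeats prio p x y -> ~~ pbeats prio p y x.
Proof. by rewrite !pbeatsE; apply: key_beats_asym. Qed.
End BuyerOrders.

Local Notation vrank p := (rank (vbeats p)).

Section Potential.
Variables (R : realDomainType) (n : nat).
Implicit Types (p : profile R n) (i x y z w : 'I_n) (A S W : {set 'I_n}).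

Lemma vrank_lt p S x y : x \in S -> vbeats p x y -> (vrank p S x < vrank p S y)%N.
Proof. by apply: rank_lt; [exact: vbeats_irr | exact: vbeats_trans]. Qed.

Lemma vrank_onto p S k : (k < #|S|)%N -> exists2 y, y \in S & vrank p S y = k.
Proof.
by apply: rank_onto; [exact: vbeats_irr | exact: vbeats_trans | exact: vbeats_total].
Qed.

Lemma vrank_lt_top p S i k x : i \in S -> (vrank p S i < k)%N -> x \in S -> x != i ->
  (vrank p S x < k)%N = (vrank p (S :\ i) x < k.-1)%N.
Proof.
by apply: rank_lt_top; [exact: vbeats_irr | exact: vbeats_trans | exact: vbeats_total].
Qed.

Lemma vbeats_le p x y : vbeats p x y -> (p y).1 <= (p x).1.
Proof. by case/orP => [/ltW //|/andP[/eqP -> _]]. Qed.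

Definition rivals i (P : pred 'I_n) A W : {set 'I_n} :=
  [set y in A :\: W | (y != i) && P y].

Lemma in_rivals i (P : pred 'I_n) A W y :
  (y \in rivals i P A W) = [&& y \in A :\: W, y != i & P y].
Proof. by rewrite inE. Qed.

(* Rivals are monotone in the class, since i itself is never counted. *)
Lemma rivals_mono i (P Q : pred 'I_n) A W : (forall z, z != i -> P z -> Q z) ->
  rivals i P A W \subset rivals i Q A W.
Proof.
move=> PQ; apply/subsetP => z; rewrite !inE => /andP[-> /andP[zi /(PQ _ zi) ->]].
by rewrite zi.
Qed.

Lemma card_rivals_all i A W : i \in A :\: W -> #|A :\: W| = (#|rivals i predT A W|).+1.
Proof.
move=> iS; rewrite (cardsD1 i) iS add1n; congr _.+1.
by apply: eq_card => y; rewrite !inE andbT andbC.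
Qed.

Lemma rivals_vrank p i A W : #|rivals i (vbeats p ^~ i) A W| = vrank p (A :\: W) i.
Proof.
apply: eq_card => y; rewrite !inE.
by have [->|//] := eqVneq y i; rewrite vbeats_irr !andbF.
Qed.

Lemma in_topk p k S x : (x \in topk p k S) = (x \in S) && (vrank p S x < k)%N.
Proof. by rewrite inE. Qed.

Lemma in_potential p m A W i : i \notin W ->
  (i \in potential p m A W) =
  (i \in A) && ((#|A :\: W| <= m - #|W|)%N || (vrank p (A :\: W) i < m - #|W|)%N).
Proof.
move=> iW; rewrite /potential; case: ifP => _; first by rewrite andbT.
by rewrite in_setU (negbTE iW) in_topk in_setD iW.
Qed.

Lemma potential_rivals p m A W i : i \in A :\: W ->
  (i \in potential p m A W) =
  (#|rivals i predT A W| < m - #|W|)%N || (#|rivals i (vbeats p ^~ i) A W| < m - #|W|)%N.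
Proof.
move=> iS; have /setDP[iA iW] := iS.
by rewrite in_potential // iA (card_rivals_all iS) rivals_vrank.
Qed.

Lemma potential_sub p m A W : W \subset A -> potential p m A W \subset A.
Proof.
move=> WA; rewrite /potential; case: ifP => // _; rewrite subUset WA /=.
by apply/subsetP => x; rewrite !inE => /andP[/andP[]].
Qed.

Lemma potential_supply p m A W w : w \in potential p m A W :\: W -> (#|W| < m)%N.
Proof.
case/setDP => wP wW; rewrite -subn_gt0.
move: wP; rewrite in_potential // => /andP[wA /orP[free|top]]; last by lia.
by apply: leq_trans free; rewrite card_gt0; apply/set0Pn; exists w; rewrite inE wW.
Qed.

(* Arithmetic behind [tighter]: if the excess of rivals over supply does not
   decrease, being below supply later implies being below supply earlier. *)
Lemma below_supply (a a' s s' : nat) : (a + s' <= a' + s)%N -> (a' < s')%N -> (a < s)%N.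
Proof. by lia. Qed.

(* State (A', W') is at least as competitive for i as (A, W): for every class
   P, the excess of rivals in P over the remaining supply does not decrease. *)
Definition tighter m i A W A' W' := forall P : pred 'I_n,
  (#|rivals i P A W| + (m - #|W'|) <= #|rivals i P A' W'| + (m - #|W|))%N.

Lemma tighter_trans m i A W A' W' A'' W'' :
  tighter m i A W A' W' -> tighter m i A' W' A'' W'' -> tighter m i A W A'' W''.
Proof. by move=> h1 h2 P; have := h1 P; have := h2 P; lia. Qed.

(* Exploring more buyers only adds rivals. *)
Lemma tighter_explore m i A A' W : A \subset A' -> tighter m i A W A' W.
Proof.
move=> AA' P; rewrite leq_add2r; apply: subset_leq_card; apply/subsetP => y.
by rewrite !inE => /andP[/andP[-> /(subsetP AA') ->] ->].
Qed.

(* Selling one unit to w removes at most one rival and exactly one unit. *)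
Lemma tighter_win m i A W w : w \in A :\: W -> (#|W| < m)%N -> tighter m i A W A (w |: W).
Proof.
move=> /setDP[_ wW] Wm P; rewrite cardsU1 wW.
have sub : rivals i P A W \subset w |: rivals i P A (w |: W).
  by apply/subsetP => y; rewrite !inE; have [->|] := eqVneq y w.
have : (#|rivals i P A W| <= (#|rivals i P A (w |: W)|).+1)%N.
  by apply: leq_trans (subset_leq_card sub) _; rewrite cardsU1; case: (_ \notin _).
by lia.
Qed.

Lemma potential_antitone p m i A W A' W' : tighter m i A W A' W' ->
  i \in A :\: W -> i \in A' :\: W' -> i \in potential p m A' W' -> i \in potential p m A W.
Proof.
move=> tight iS iS'; rewrite !potential_rivals //.
have := tight predT; have := tight (vbeats p ^~ i).
move=> hb ha /orP[h|h]; apply/orP; [left | right].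
  exact: below_supply ha h.
exact: below_supply hb h.
Qed.
End Potential.

Section Price.
Variables (R : realDomainType) (n : nat).
Implicit Types (p : profile R n) (i x y : 'I_n) (A S W : {set 'I_n}).

Definition price p m A W : R :=
  if (#|A :\: W| <= m - #|W|)%N then 0 else kth_val p (m - #|W|) (A :\: W).

Lemma price_spec p m A W i : i \in A :\: W -> i \in potential p m A W ->
  (m - #|W| < #|A :\: W|)%N ->
  exists2 y, y \in A :\: W & [/\ y != i, vrank p (A :\: W) y = (m - #|W|)%N,
    vbeats p i y & price p m A W = (p y).1].
Proof.
move=> iS ip binding; have /setDP[iA iW] := iS.
have top_i : (vrank p (A :\: W) i < m - #|W|)%N.
  by move: ip; rewrite in_potential // iA leqNgt binding.
rewrite /price leqNgt binding /kth_val; case: pickP => [y /andP[yS /eqP ry]|none].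
  change (vrank p (A :\: W) y = m - #|W|)%N in ry.
  have yi : y != i by apply: contraTneq top_i => <-; rewrite ry ltnn.
  exists y => //; split => //.
  have /orP[y_beats_i|//] := vbeats_total p yi.
  by have := vrank_lt yS y_beats_i; rewrite ry ltnNge (ltnW top_i).
have [y yS ry] := vrank_onto p binding.
by have := none y; rewrite yS /= -/(rank _ _ y) ry eqxx.
Qed.

Lemma price_le_value p m A W i : i \in A :\: W -> i \in potential p m A W ->
  0 <= (p i).1 -> price p m A W <= (p i).1.
Proof.
move=> iS ip vi0; have [binding|free] := ltnP (m - #|W|) #|A :\: W|.
  by have [y _ [_ _ /vbeats_le iy ->]] := price_spec iS ip binding.
by rewrite /price free.
Qed.

Lemma price_ge0 p m A W i : (forall j, j != i -> 0 <= (p j).1) ->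
  i \in A :\: W -> i \in potential p m A W -> 0 <= price p m A W.
Proof.
move=> rivals_ge0 iS ip; have [binding|free] := ltnP (m - #|W|) #|A :\: W|.
  by have [y _ [yi _ _ ->]] := price_spec iS ip binding; apply: rivals_ge0.
by rewrite /price free.
Qed.

Lemma rivals_above_price p m A W i : i \in A :\: W -> i \in potential p m A W ->
  (#|rivals i (fun z => (price p m A W < (p z).1)%R) A W| < m - #|W|)%N.
Proof.
move=> iS ip; have [binding|free] := ltnP (m - #|W|) #|A :\: W|.
  have [y yS [_ ry iy ->]] := price_spec iS ip binding.
  rewrite -ry; apply: proper_card; apply/properP; split.
    apply/subsetP => z; rewrite in_rivals => /and3P[zS _ yz].
    by rewrite in_set zS /vbeats yz.
  by exists i; [rewrite in_set iS | rewrite in_rivals eqxx andbF].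
apply: leq_trans free; apply: proper_card; apply/properP; split.
  by apply/subsetP => z; rewrite in_rivals => /andP[].
by exists i; rewrite // in_rivals eqxx andbF.
Qed.

Lemma rivals_at_price p m A W i : i \in A :\: W -> i \in potential p m A W ->
  (m - #|W| < #|A :\: W|)%N ->
  (m - #|W| <= #|rivals i (fun z => (price p m A W <= (p z).1)%R) A W|)%N.
Proof.
move=> iS ip binding; have [y yS [yi ry iy ->]] := price_spec iS ip binding.
set X := [set z in (A :\: W) :\ i | vbeats p z y].
have yX : y \notin X by rewrite in_set vbeats_irr andbF.
have sub : y |: X \subset rivals i (fun z => (p y).1 <= (p z).1)%R A W.
  apply/subsetP => z; rewrite in_setU1 in_rivals => /orP[/eqP -> | ].
    by rewrite yS yi /=.
  by rewrite in_set in_setD1 => /andP[/andP[-> ->] /vbeats_le ->].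
rewrite -ry (rank_D1 _ y iS) iy; apply: leq_trans (subset_leq_card sub).
by rewrite cardsU1 yX.
Qed.
End Price.

Section OneReport.
Variables (R : realDomainType) (n : nat) (i : 'I_n) (pD pT : profile R n).
Hypothesis agree : forall j, j != i -> pD j = pT j.
Implicit Types (x y z : 'I_n) (A S W : {set 'I_n}).

Lemma vbeats_agree x y : x != i -> y != i -> vbeats pD x y = vbeats pT x y.
Proof. by move=> xi yi; rewrite /vbeats !agree. Qed.

Lemma vrank_agree S x : i \notin S -> x != i -> vrank pD S x = vrank pT S x.
Proof.
move=> iS xi; apply: eq_card => y; rewrite !inE.
have [yS|//] := boolP (y \in S); rewrite vbeats_agree //.
by apply: contraNneq iS => <-.
Qed.

Lemma potential_same m A W :
  (i \in A :\: W -> i \in potential pD m A W /\ i \in potential pT m A W) ->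
  potential pD m A W = potential pT m A W.
Proof.
move=> both; rewrite /potential; case: ifP => // binding; congr (_ :|: _).
set S := A :\: W; set k := (m - #|W|)%N.
apply/setP => x; rewrite !in_topk; have [xS|//] := boolP (x \in S).
have [iS|iS] := boolP (i \in S); last first.
  by rewrite vrank_agree //; apply: contraNneq iS => <-.
have [inD inT] := both iS; have /setDP[iA iW] := iS.
have topD : (vrank pD S i < k)%N by move: inD; rewrite in_potential // iA binding.
have topT : (vrank pT S i < k)%N by move: inT; rewrite in_potential // iA binding.
have [->|xi] := eqVneq x i; first by rewrite topD topT.
rewrite (vrank_lt_top iS topD xS xi) (vrank_lt_top iS topT xS xi) vrank_agree //.
by rewrite !inE eqxx.
Qed.

Lemma potential_truthful m A W : i \in A :\: W -> i \in potential pD m A W ->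
  price pD m A W < (pT i).1 -> i \in potential pT m A W.
Proof.
move=> iS ipD cheap; rewrite potential_rivals //; apply/orP; right.
apply: leq_ltn_trans (rivals_above_price iS ipD); apply: subset_leq_card.
apply: rivals_mono => z zi /vbeats_le; rewrite -(agree zi) => iz.
exact: lt_le_trans cheap iz.
Qed.

Lemma price_truthful_le m A W A' W' : (forall j, j != i -> 0 <= (pD j).1) ->
  tighter m i A W A' W' -> i \in A :\: W -> i \in A' :\: W' ->
  i \in potential pT m A W -> i \in potential pD m A' W' ->
  price pT m A W <= price pD m A' W'.
Proof.
move=> rivals_ge0 tight iS iS' ipT ipD.
have [binding|free] := ltnP (m - #|W|) #|A :\: W|; last first.
  by rewrite /price free; apply: price_ge0 ipD.
rewrite leNgt; apply/negP => cheaper; set c := price pD m A' W' in cheaper.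
have above : (m - #|W| <= #|rivals i (fun z => c < (pD z).1)%R A W|)%N.
  apply: leq_trans (rivals_at_price iS ipT binding) (subset_leq_card _).
  by apply: rivals_mono => z zi; rewrite (agree zi); apply: lt_le_trans cheaper.
have below := rivals_above_price iS' ipD.
by have := below_supply (tight _) below; rewrite ltnNge above.
Qed.
End OneReport.

Section Loop.
Variables (R : realDomainType) (n : nat) (prio : {set 'I_n} -> nat).
Implicit Types (p : profile R n) (i w x y : 'I_n) (A S W : {set 'I_n}).

Lemma closure_sub f p m A W : A \subset Defs.closure f p m A W.
Proof.
elim: f A => [|f IH] A //=; case: pickP => [x _|_] //.
exact: subset_trans (subsetUl _ _) (IH _).
Qed.

Lemma new_potential_explored p m A W w : W \subset A ->
  w \in potential p m A W :\: W -> w \in A :\: W.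
Proof. by move=> WA; apply/subsetP/setSD/potential_sub. Qed.

Lemma add_winner_sub p m A W w : W \subset A ->
  w \in potential p m A W :\: W -> w |: W \subset A.
Proof.
by move=> WA /(new_potential_explored WA) /setDP[wA _]; rewrite subUset sub1set wA.
Qed.

Lemma loop_step f p m A W pay : mudan_loop f.+1 prio p m A W pay =
  match top_prio prio p (potential p m (Defs.closure n.+1 p m A W) W :\: W) with
  | None => (W, pay)
  | Some w => mudan_loop f prio p m (Defs.closure n.+1 p m A W) (w |: W)
      (fun j => if j == w then price p m (Defs.closure n.+1 p m A W) W else pay j)
  end.
Proof. by []. Qed.

Lemma top_prio_spec p S x : top_prio prio p S = Some x ->
  x \in S /\ forall y, y \in S -> y != x -> pbeats prio p x y.
Proof.
rewrite /top_prio; case: pickP => // y /andP[yS /forall_inP y_top] [<-].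
by split => // z /y_top; case: eqP.
Qed.

Lemma top_prio_exists p S x : x \in S -> exists y, top_prio prio p S = Some y.
Proof.
move=> xS; rewrite /top_prio; case: pickP => [y _|none]; first by exists y.
have S_gt0 : (0 < #|S|)%N by apply/card_gt0P; exists x.
have [y yS y_top] : exists2 y, y \in S & rank (pbeats prio p) S y = 0%N.
  apply: rank_onto S_gt0; [exact: pbeats_irr | exact: pbeats_trans | exact: pbeats_total].
have no_better z : z \in S -> ~~ pbeats prio p z y.
  move=> zS; apply/negP => zy; suff : z \in set0 by rewrite inE.
  by rewrite -(cards0_eq y_top) inE zS.
have := none y; rewrite yS /= => /negbT/negP; case; apply/forall_inP => z zS.
have [//|zy] := eqVneq z y; have := pbeats_total prio p zy.
by rewrite (negbTE (no_better z zS)).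
Qed.

Lemma loop_winners_grow f p m A W pay : W \subset (mudan_loop f prio p m A W pay).1.
Proof.
elim: f A W pay => [|f IH] A W pay //=.
case: (top_prio _ _ _) => [w|] //=.
exact: subset_trans (subsetUr _ _) (IH _ _ _).
Qed.

Lemma loop_pay_fixed f p m A W pay j : j \in W ->
  (mudan_loop f prio p m A W pay).2 j = pay j.
Proof.
elim: f A W pay => [|f IH] A W pay //= jW.
case e: (top_prio _ _ _) => [w|] //=.
have [wS _] := top_prio_spec e.
rewrite IH ?inE ?jW ?orbT //; case: eqP => // ejw.
by move: wS; rewrite inE -ejw jW.
Qed.

Lemma winner_price f p m A W pay i : W \subset A -> i \notin W ->
  i \in (mudan_loop f prio p m A W pay).1 ->
  exists A' W', [/\ tighter m i (Defs.closure n.+1 p m A W) W A' W',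
    i \in A' :\: W', i \in potential p m A' W' &
    (mudan_loop f prio p m A W pay).2 i = price p m A' W'].
Proof.
elim: f A W pay => [|f IH] A W pay WA iW; first by rewrite /= (negbTE iW).
rewrite loop_step; set A1 := Defs.closure n.+1 p m A W.
have WA1 : W \subset A1 := subset_trans WA (closure_sub _ _ _ _ _).
case e: (top_prio _ _ _) => [w|]; last by rewrite /= (negbTE iW).
have [wS _] := top_prio_spec e.
have [<-|wi] := eqVneq w i.
  move=> _; exists A1, W; split => //.
  - exact: new_potential_explored wS.
  - by case/setDP: wS.
  - by rewrite loop_pay_fixed ?inE ?eqxx.
have WA2 : w |: W \subset A1 := add_winner_sub WA1 wS.
have iW2 : i \notin w |: W by rewrite !inE negb_or iW andbT eq_sym.
move=> /(IH _ _ _ WA2 iW2) [A' [W' [tight iS' ip ->]]]; exists A', W'; split => //.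
have win := tighter_win i (new_potential_explored WA1 wS) (potential_supply wS).
have explore := tighter_explore m i (w |: W) (closure_sub n.+1 p m A1 (w |: W)).
exact: tighter_trans win (tighter_trans explore tight).
Qed.

Definition payoff (v : R) i (res : {set 'I_n} * ('I_n -> R)) : R :=
  (if i \in res.1 then v else 0) - (if i \in res.1 then res.2 i else 0).

Lemma payoff_ge0 f p m A W pay i : W \subset A -> i \notin W -> 0 <= (p i).1 ->
  0 <= payoff (p i).1 i (mudan_loop f prio p m A W pay).
Proof.
move=> WA iW vi0; rewrite /payoff; case: ifP => wins; last by rewrite subrr.
have [A' [W' [_ iS' ip ->]]] := winner_price WA iW wins.
by rewrite subr_ge0 price_le_value.
Qed.

Lemma payoff_new_winner f p m A W pay v c i :
  payoff v i (mudan_loop f prio p m A (i |: W) (fun j => if j == i then c else pay j))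
  = v - c.
Proof.
rewrite /payoff (subsetP (loop_winners_grow _ _ _ _ _ _)) ?setU11 //.
by rewrite loop_pay_fixed ?setU11 ?eqxx.
Qed.
End Loop.

Section Deviation.
Variables (R : realDomainType) (n : nat) (prio : {set 'I_n} -> nat) (m : nat).
Variables (i : 'I_n) (pD pT : profile R n).
Hypothesis agree : forall j, j != i -> pD j = pT j.
Hypothesis prio_le : (prio (pD i).2 <= prio (pT i).2)%N.
Hypothesis rivals_ge0 : forall j, j != i -> 0 <= (pD j).1.
Hypothesis value_ge0 : 0 <= (pT i).1.
Implicit Types (x y w : 'I_n) (A S W : {set 'I_n}).

Definition safe A W :=
  i \in A :\: W -> i \in potential pD m A W /\ i \in potential pT m A W.

(* In a safe state i is not among the buyers whose neighbours are expanded,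
   so the closure step never reads i's report. *)
Lemma safe_not_expanded A W : i \notin W -> safe A W -> i \notin to_expand pD m A W.
Proof.
move=> iW safeAW; rewrite !inE (negbTE iW) /=; apply/negP => /andP[niP iA].
have iS : i \in A :\: W by rewrite inE iW iA.
by have [ipD _] := safeAW iS; rewrite ipD in niP.
Qed.

Lemma closure_same f A W : i \notin W ->
  (forall Ac : {set 'I_n},
     A \subset Ac -> Ac \subset Defs.closure f pD m A W -> safe Ac W) ->
  Defs.closure f pD m A W = Defs.closure f pT m A W.
Proof.
elim: f A => [//|f IH] A iW safe_between.
have safeA : safe A W := safe_between A (subxx A) (closure_sub _ _ _ _ _).
have iE := safe_not_expanded iW safeA.
have same_expand : to_expand pD m A W = to_expand pT m A W.
  by rewrite /to_expand (potential_same agree safeA).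
have same_pick : [pick x in to_expand pT m A W | ~~ ((pT x).2 \subset A)] =
                 [pick x in to_expand pD m A W | ~~ ((pD x).2 \subset A)].
  rewrite -same_expand; apply: eq_pick => x /=.
  have [xE|//] := boolP (x \in to_expand pD m A W).
  by rewrite agree //; apply: contraNneq iE => <-.
move: safe_between; rewrite /= same_pick; case: pickP => [x /andP[xE _]|] // safe_between.
have xi : x != i by apply: contraNneq iE => <-.
rewrite -(agree xi); apply: IH => // Ac AAc Acl; apply: safe_between => //.
exact: subset_trans (subsetUl _ _) AAc.
Qed.

Lemma round_same A W A' W' : i \notin W ->
  tighter m i (Defs.closure n.+1 pD m A W) W A' W' -> i \in A' :\: W' ->
  i \in potential pD m A' W' -> i \in potential pT m A' W' ->
  [/\ Defs.closure n.+1 pD m A W = Defs.closure n.+1 pT m A W,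
    potential pD m (Defs.closure n.+1 pD m A W) W =
    potential pT m (Defs.closure n.+1 pD m A W) W &
    safe (Defs.closure n.+1 pD m A W) W].
Proof.
move=> iW tight iS' ipD ipT.
have safe_between (Ac : {set 'I_n}) : Ac \subset Defs.closure n.+1 pD m A W -> safe Ac W.
  move=> Acl iS; have tightc := tighter_trans (tighter_explore m i W Acl) tight.
  by split; apply: potential_antitone tightc iS iS' _.
have safe1 := safe_between _ (subxx _).
split => //; first by apply: closure_same => // Ac _; apply: safe_between.
exact: (potential_same agree) safe1.
Qed.

Lemma pbeats_agree x y : x != i -> y != i -> pbeats prio pD x y = pbeats prio pT x y.
Proof. by move=> xi yi; rewrite /pbeats !agree. Qed.

Lemma pbeats_truthful x : x != i -> pbeats prio pD i x -> pbeats prio pT i x.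
Proof.
move=> xi; rewrite /pbeats (agree xi).
by move: prio_le (prio (pT x).2) => le c; lia.
Qed.

Lemma top_same S wD wT : top_prio prio pD S = Some wD -> top_prio prio pT S = Some wT ->
  wT != i -> wD = wT.
Proof.
move=> /top_prio_spec[wDS wD_top] /top_prio_spec[wTS wT_top] wTi.
have wDi : wD != i.
  apply/eqP => eDi; rewrite eDi in wDS wD_top.
  have iT : pbeats prio pT i wT by apply: pbeats_truthful wTi (wD_top _ wTS wTi).
  by have := pbeats_asym iT; rewrite wT_top // eq_sym.
apply/eqP/negPn/negP => wDT; have := pbeats_asym (wT_top _ wDS wDT).
by rewrite -pbeats_agree // (wD_top _ wTS) // eq_sym.
Qed.

Lemma deviation_unprofitable f A W payD payT : W \subset A -> i \notin W ->
  payoff (pT i).1 i (mudan_loop f prio pD m A W payD)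
  <= payoff (pT i).1 i (mudan_loop f prio pT m A W payT).
Proof.
elim: f A W payD payT => [|f IH] A W payD payT WA iW.
  by rewrite /payoff /= (negbTE iW).
have truth_ge0 := payoff_ge0 prio f.+1 m payT WA iW value_ge0.
case winsD: (i \in (mudan_loop f.+1 prio pD m A W payD).1); last first.
  by rewrite {1}/payoff winsD subrr.
have [A' [W' [tight iS' ipD pay_i]]] := winner_price WA iW winsD.
have payoffD : payoff (pT i).1 i (mudan_loop f.+1 prio pD m A W payD)
               = (pT i).1 - price pD m A' W' by rewrite /payoff winsD pay_i.
have [costly|cheap] := leP (pT i).1 (price pD m A' W').
  by rewrite payoffD; apply: le_trans truth_ge0; rewrite subr_le0.
have ipT := potential_truthful agree iS' ipD cheap.
have [same_closure same_potential safe1] := round_same iW tight iS' ipD ipT.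
move: payoffD winsD; rewrite !loop_step -same_closure -same_potential.
set A1 := Defs.closure n.+1 pD m A W in tight safe1 *.
have WA1 : W \subset A1 := subset_trans WA (closure_sub _ _ _ _ _).
case eD: top_prio => [wD|] /=; last by rewrite (negbTE iW).
have [wDS _] := top_prio_spec eD.
have [wT eT] := top_prio_exists prio pT wDS; rewrite eT.
have [wTi|wTi] := eqVneq wT i.
  move=> -> _; rewrite wTi payoff_new_winner lerD2l lerN2.
  have iS1 : i \in A1 :\: W.
    by rewrite -wTi; apply: new_potential_explored WA1 (top_prio_spec eT).1.
  exact: (price_truthful_le agree rivals_ge0 tight iS1 iS' (safe1 iS1).2 ipD).
move=> _ _; rewrite (top_same eD eT wTi); apply: IH.
  exact: add_winner_sub WA1 (top_prio_spec eT).1.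
by rewrite !inE negb_or iW andbT eq_sym.
Qed.
End Deviation.

(* A run of MUDAN on p started inside a set X closed under p's out-neighbours
   only reads reports of buyers in X, so it is unchanged on any profile q that
   agrees with p on X. *)
Section Locality.
Variables (R : realDomainType) (n : nat) (prio : {set 'I_n} -> nat) (m : nat).
Variables (p q : profile R n) (X : {set 'I_n}).
Hypothesis q_agrees : forall x, x \in X -> q x = p x.
Hypothesis X_closed : forall x, x \in X -> (p x).2 \subset X.
Implicit Types (x y : 'I_n) (A S W : {set 'I_n}).

Lemma vbeats_local x y : x \in X -> y \in X -> vbeats q x y = vbeats p x y.
Proof. by move=> xX yX; rewrite /vbeats !q_agrees. Qed.

Lemma vrank_local S x : S \subset X -> x \in X ->
  vrank q S x = vrank p S x.
Proof.
move=> SX xX; apply: eq_card => y; rewrite !inE.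
by have [yS|//] := boolP (y \in S); rewrite vbeats_local // (subsetP SX).
Qed.

Lemma topk_local k S : S \subset X -> topk q k S = topk p k S.
Proof.
move=> SX; apply/setP => x; rewrite !in_topk.
by have [xS|//] := boolP (x \in S); rewrite vrank_local // (subsetP SX).
Qed.

Lemma potential_local A W : A \subset X -> potential q m A W = potential p m A W.
Proof.
by move=> AX; rewrite /potential topk_local // (subset_trans (subsetDl _ _) AX).
Qed.

Lemma to_expand_sub (r : profile R n) A W : W \subset A -> to_expand r m A W \subset A.
Proof. by move=> WA; rewrite /to_expand subUset WA subDset subsetUr. Qed.

Lemma closure_local f A W : W \subset A -> A \subset X ->
  Defs.closure f q m A W = Defs.closure f p m A W /\ Defs.closure f p m A W \subset X.
Proof.
elim: f A => [|f IH] A WA AX //=.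
have EX : to_expand p m A W \subset X := subset_trans (to_expand_sub p WA) AX.
have same_pick : [pick x in to_expand q m A W | ~~ ((q x).2 \subset A)] =
                 [pick x in to_expand p m A W | ~~ ((p x).2 \subset A)].
  rewrite /to_expand potential_local //; apply: eq_pick => x /=.
  have [xE|//] := boolP (x \in _); rewrite q_agrees //.
  by apply: (subsetP EX); rewrite /to_expand.
rewrite same_pick; case: pickP => [x /andP[/(subsetP EX) xX _]|] //.
rewrite q_agrees //; apply: IH; first exact: subset_trans WA (subsetUl _ _).
by rewrite subUset AX X_closed.
Qed.

Lemma kth_val_local k S : S \subset X -> kth_val q k S = kth_val p k S.
Proof.
move=> SX; rewrite /kth_val.
have -> : [pick y in S | #|[set z in S | vbeats q z y]| == k] =
          [pick y in S | #|[set z in S | vbeats p z y]| == k].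
  apply: eq_pick => y /=; have [yS|//] := boolP (y \in S).
  by rewrite -!/(rank _ _ y) vrank_local // (subsetP SX).
by case: pickP => [y /andP[yS _]|] //; rewrite q_agrees // (subsetP SX).
Qed.

Lemma price_local A W : A \subset X -> price q m A W = price p m A W.
Proof.
by move=> AX; rewrite /price kth_val_local // (subset_trans (subsetDl _ _) AX).
Qed.

Lemma top_prio_local S : S \subset X -> top_prio prio q S = top_prio prio p S.
Proof.
move=> SX; apply: eq_pick => x /=; have [xS|//] := boolP (x \in S).
apply: eq_forallb => y; have [yS|//] := boolP (y \in S).
by rewrite /pbeats !q_agrees // (subsetP SX).
Qed.

Lemma loop_local f A W pay : W \subset A -> A \subset X ->
  mudan_loop f prio q m A W pay = mudan_loop f prio p m A W pay.
Proof.
elim: f A W pay => [|f IH] A W pay WA AX //.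
rewrite !loop_step; have [-> A1X] := closure_local n.+1 WA AX.
set A1 := Defs.closure n.+1 p m A W in A1X *.
have WA1 : W \subset A1 := subset_trans WA (closure_sub _ _ _ _ _).
have newX : potential p m A1 W :\: W \subset X.
  exact: subset_trans (subsetDl _ _) (subset_trans (potential_sub _ _ WA1) A1X).
rewrite potential_local // top_prio_local //.
case e: top_prio => [w|] //; rewrite price_local // IH //.
exact: add_winner_sub WA1 (top_prio_spec e).1.
Qed.
End Locality.

(* The buyers reachable from the seller form the least fixpoint of
   [reach_step], hence a set closed under out-neighbours. *)
Section Reachability.
Variables (R : realDomainType) (n : nat) (rs : {set 'I_n}) (p : profile R n).

Lemma reach_step_mono : {homo reach_step rs p : X Y / X \subset Y}.
Proof.
move=> X Y XY; rewrite /reach_step setUS //; apply/subsetP => z /bigcupP[x xX zx].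
by apply/bigcupP; exists x => //; apply: (subsetP XY).
Qed.

Lemma reachable_fixset : reachable rs p = fixset (reach_step rs p).
Proof.
by rewrite /reachable iterS -[n in iter n]card_ord -/(fixset _) (fixsetK reach_step_mono).
Qed.

Lemma reachable_seed : rs \subset reachable rs p.
Proof.
by rewrite reachable_fixset -(fixsetK reach_step_mono) subsetUl.
Qed.

Lemma reachable_closed x : x \in reachable rs p -> (p x).2 \subset reachable rs p.
Proof.
rewrite reachable_fixset -{2}(fixsetK reach_step_mono) => xR.
by apply: subset_trans (subsetUr _ _); apply: bigcup_sup xR.
Qed.
End Reachability.

Section Mechanism.
Variables (R : realDomainType) (n : nat) (prio : {set 'I_n} -> nat).
Variables (rs : {set 'I_n}) (m : nat).

Lemma mudan_silence (p : profile R n) i :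
  mudan prio rs m (silence_unreach rs p i) = mudan prio rs m p.
Proof.
rewrite /mudan (@loop_local R n prio m p _ (reachable rs p)) //.
- by move=> x xR; rewrite /silence_unreach xR orbT.
- exact: reachable_closed.
- exact: sub0set.
- exact: reachable_seed.
Qed.

Lemma truthful_dominates (pD pT : profile R n) i :
  (forall j, j != i -> pD j = pT j) -> (prio (pD i).2 <= prio (pT i).2)%N ->
  (forall j, j != i -> 0 <= (pD j).1) -> 0 <= (pT i).1 ->
  utility (pT i).1 i (mudan prio rs m pD) <= utility (pT i).1 i (mudan prio rs m pT).
Proof.
move=> agree prio_le rivals_ge0 value_ge0.
exact: (deviation_unprofitable m agree prio_le rivals_ge0 value_ge0 n.+1
  (fun _ => 0) (fun _ => 0) (sub0set rs) (negbT (in_set0 i))).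
Qed.
End Mechanism.

Unset Implicit Arguments. Set Strict Implicit.

Theorem lemma2 (R : realDomainType) (n m : nat) (rs : {set 'I_n})
  (prio : {set 'I_n} -> nat)
  (prio_mono : forall S T : {set 'I_n}, S \subset T -> (prio S <= prio T)%N)
  (theta : profile R n) :
  (1 <= m)%N ->
  (forall j, 0 <= (theta j).1) ->
  reachable rs theta = [set: 'I_n] ->
  forall (i : 'I_n) (theta' : profile R n) (rep'' : report R n),
  (forall j, j != i -> 0 <= (theta' j).1 /\ (theta' j).2 \subset (theta j).2) ->
  0 <= rep''.1 -> rep''.2 \subset (theta i).2 ->
  utility (theta i).1 i
      (mudan prio rs m (silence_unreach rs (upd theta' i rep'') i))
  <= utility (theta i).1 i (mudan prio rs m (upd theta' i (theta i))).
Proof.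
move=> _ theta_ge0 _ i theta' rep'' others_ok _ rep_sub.
rewrite mudan_silence.
have -> : (theta i).1 = (upd theta' i (theta i) i).1 by rewrite /upd eqxx.
apply: truthful_dominates.
- by move=> j ji; rewrite /upd (negbTE ji).
- by rewrite /upd !eqxx; exact: prio_mono rep_sub.
- by move=> j ji; rewrite /upd (negbTE ji); case: (others_ok j ji).
- by rewrite /upd eqxx; exact: theta_ge0.
Qed.
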